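(* In the team production setting with $f$ strictly concave, differentiable, and homogeneous of degree $k\in(0,1)$ and costs $c_{A_i}(a_{A_i})=a_{A_i}$, $$\frac{V^*_{\mathsf{LIN}}}{V^*_{\mathsf{FB}}}\ge\Big(\frac kn\Big)^{\frac k{1-k}}.$$
   Context: Team production: $n$ agents choose efforts $a_{A_i}\ge0$; output has mean $f(\boldsymbol a)$. A linear contract profile $\boldsymbol\phi$ pays agent $i$ the amount $\phi_{A_i}x$; for $\boldsymbol\phi>0$ the induced equilibrium is $\boldsymbol a(\boldsymbol\phi)=\arg\max_{\boldsymbol a}\{f(\boldsymbol a)-\sum_ia_{A_i}/\phi_{A_i}\}$. Let $\Delta=\{\boldsymbol\phi\ge0:\sum_i\phi_{A_i}=1\}$. First-best gross output subject to budget balance: $V^*_{\mathsf{FB}}=\max\{f(\boldsymbol a):\boldsymbol a\ge0,\ f(\boldsymbol a)=\sum_ia_{A_i}\}$. Second-best with linear contracts: $V^*_{\mathsf{LIN}}=\sup_{\boldsymbol\phi\in\Delta,\boldsymbol\phi>0}f(\boldsymbol a(\boldsymbol\phi))$. Homogeneous of degree $k$: $f(\lambda\boldsymbol a)=\lambda^kf(\boldsymbol a)$ for $\lambda>0$. *)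

From HB Require Import structures.
From mathcomp Require Import all_boot all_order all_algebra.
From mathcomp Require Import all_classical all_reals all_analysis.
Set Implicit Arguments. Unset Strict Implicit. Unset Printing Implicit Defensive.
Import Order.TTheory GRing.Theory Num.Theory.
Import numFieldNormedType.Exports.
Local Open Scope classical_set_scope.
Local Open Scope ring_scope.

Section TeamProduction.
Variables (R : realType) (n : nat).
Implicit Types (a b phi : 'rV[R]_n) (f : 'rV[R]_n -> R).

Definition nonneg a : Prop := forall i, 0 <= a ord0 i.
Definition posv a : Prop := forall i, 0 < a ord0 i.

Definition simplex phi : Prop := nonneg phi /\ \sum_(i < n) phi ord0 i = 1.

Definition strictly_concave_on_orthant f : Prop :=
  forall a b (t : R), nonneg a -> nonneg b -> a != b -> 0 < t < 1 ->
    t * f a + (1 - t) * f b < f (t *: a + (1 - t) *: b).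

Definition homogeneous_deg f (k : R) : Prop :=
  forall (lam : R) a, 0 < lam -> nonneg a -> f (lam *: a) = lam `^ k * f a.

Definition agents_obj f phi a : R :=
  f a - \sum_(i < n) a ord0 i / phi ord0 i.

Definition induced_eq f phi a : Prop :=
  nonneg a /\ forall b, nonneg b -> agents_obj f phi b <= agents_obj f phi a.

(* first best gross output subject to budget balance *)
Definition V_FB f : \bar R :=
  ereal_sup [set (f a)%:E | a in [set a | nonneg a /\ f a = \sum_(i < n) a ord0 i]].

Definition V_LIN f : \bar R :=
  ereal_sup [set (f a)%:E | a in
    [set a | exists phi, [/\ simplex phi, posv phi & induced_eq f phi a]]].

End TeamProduction.

From HB Require Import structures.
From mathcomp Require Import all_boot all_order all_algebra.
From mathcomp Require Import all_classical all_reals all_analysis.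
From mathcomp Require Import ring lra.
Set Implicit Arguments. Unset Strict Implicit. Unset Printing Implicit Defensive.
Import Order.TTheory GRing.Theory Num.Theory.
Import numFieldNormedType.Exports.
Local Open Scope classical_set_scope.
Local Open Scope ring_scope.

(* With uniform shares 1/n, the induced equilibrium c maximises the net output
   f a - n * sum_i a_i over the orthant; it exists because homogeneity of degree
   k < 1 makes this objective nonpositive far from the origin.  Comparing c with
   the points l c (l > 1) yields the Euler-type bound k f(c) <= n sum_i c_i, and
   comparing it with t a, for a budget-balanced a (f a = sum_i a_i) and the scale
   t = (k/n)^(1/(1-k)), yields (k/n)^(k/(1-k)) f(a) <= f(c). *)

Section PowerInequalities.
Variable R : realType.
Implicit Types k l r : R.

Lemma powR_le_affine r l : 0 < r < 1 -> 0 <= l -> l `^ r <= r * l + (1 - r).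
Proof.
move=> /andP[r0 r1] l0.
have r1' : 0 < 1 - r by rewrite subr_gt0.
have := @conjugate_powR R (l `^ r) 1 r^-1 (1 - r)^-1 (powR_ge0 _ _) ler01
  ltac:(by rewrite invr_gt0) ltac:(by rewrite invr_gt0) ltac:(by rewrite !invrK addrC subrK).
rewrite mulr1 -powRrM mulfV ?gt_eqF // powRr1 // powR1 !invrK.
by rewrite mulrC mul1r.
Qed.

Lemma powR_secant_ge k l : 0 < k < 1 -> 0 <= l ->
  k * (l - 1) <= l `^ (1 - k) * (l `^ k - 1).
Proof.
move=> /andP[k0 k1] l0.
have k1' : 0 < 1 - k < 1 by apply/andP; split; lra.
rewrite [leRHS]mulrBr mulr1 -powRD ?subrK ?oner_eq0 // powRr1 //.
have := @powR_le_affine _ _ k1' l0; lra.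
Qed.

Lemma euler_le_of_ray_max k x y : 0 < k < 1 -> 0 <= y ->
  (forall l, 1 < l -> l `^ k * x - l * y <= x - y) -> k * x <= y.
Proof.
move=> /andP[k0 k1] y0 ray_max.
have [x_le0|x_gt0] := leP x 0; first by nra.
have k1' : 0 < 1 - k by rewrite subr_gt0.
have scaled l : 1 < l -> k * x <= l `^ (1 - k) * y.
  move=> l1; have l0 : 0 <= l by lra.
  have := @powR_secant_ge k l ltac:(lra) l0.
  have := ray_max l l1.
  have lk0 : 0 <= l `^ (1 - k) := powR_ge0 _ _.
  nra.
apply/ler_addgt0Pr => e e0.
pose t := 1 + e / (y + 1).
have t1 : 1 < t by rewrite /t ltrDl divr_gt0 //; lra.
have ty : t * y <= y + e.
  rewrite /t mulrDl mul1r lerD2l mulrAC ler_pdivrMr; nra.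
pose l := t `^ (1 - k)^-1.
have lt : l `^ (1 - k) = t.
  by rewrite /l -powRrM mulVf ?gt_eqF // powRr1 //; lra.
have l1 : 1 < l.
  have := @gt0_ltr_powR R (1 - k)^-1 ltac:(by rewrite invr_gt0) 1 t.
  by rewrite powR1 !nnegrE; apply => //; lra.
by apply: le_trans (scaled l l1) _; rewrite lt.
Qed.

End PowerInequalities.

Section EffortProfiles.
Variables (R : realType) (n : nat).
Implicit Types (a b : 'rV[R]_n) (f : 'rV[R]_n -> R) (M lam : R).

Definition total_effort a : R := \sum_(i < n) a ord0 i.

Definition net_output f lam a : R := f a - lam * total_effort a.

Definition effort_box M := [set a : 'rV[R]_n | forall i, `[0, M]%classic (a ord0 i)].

Lemma total_effort_continuous : continuous total_effort.
Proof.
suff sum_cont (s : seq 'I_n) : continuous (fun a : 'rV[R]_n => \sum_(i <- s) a ord0 i).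
  exact: sum_cont.
elim: s => [|j s IH].
  under eq_fun do rewrite big_nil; exact: cst_continuous.
under eq_fun do rewrite big_cons.
by move=> a; apply: continuousD; [exact: coord_continuous | exact: IH].
Qed.

Lemma total_effortZ lam a : total_effort (lam *: a) = lam * total_effort a.
Proof. by rewrite mulr_sumr; apply: eq_bigr => i _; rewrite mxE. Qed.

Lemma total_effort0 : total_effort 0 = 0.
Proof. by rewrite /total_effort big1 // => i _; rewrite mxE. Qed.

Lemma total_effort_ge0 a : nonneg a -> 0 <= total_effort a.
Proof. by move=> a0; apply: sumr_ge0 => i _; exact: a0. Qed.

Lemma coord_le_total_effort a i : nonneg a -> a ord0 i <= total_effort a.
Proof.
by move=> a0; rewrite /total_effort (bigD1 i) //= lerDl sumr_ge0 // => j _.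
Qed.

Lemma nonneg0 : nonneg (0 : 'rV[R]_n).
Proof. by move=> i; rewrite mxE. Qed.

Lemma nonnegZ lam a : 0 <= lam -> nonneg a -> nonneg (lam *: a).
Proof. by move=> lam0 a0 i; rewrite mxE mulr_ge0. Qed.

Lemma effort_boxP M a : effort_box M a <-> forall i, 0 <= a ord0 i <= M.
Proof. by split => Ha i; have := Ha i; rewrite /= in_itv. Qed.

Lemma effort_box_nonneg M a : effort_box M a -> nonneg a.
Proof. by move/effort_boxP => Ha i; case/andP: (Ha i). Qed.

Lemma net_output_continuous f lam :
  {within [set a | nonneg a], continuous f} ->
  {within [set a | nonneg a], continuous net_output f lam}.
Proof.
move=> f_cont a.
apply: (@continuousB _ _ (subspace [set a | nonneg a]) f
  (fun a => lam * total_effort a)); first exact: f_cont.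
apply: continuousM; first exact: cst_continuous.
exact: (continuous_subspaceT total_effort_continuous).
Qed.

Lemma orthant_continuous_box_max f M : 0 <= M ->
  {within [set a | nonneg a], continuous f} ->
  exists2 c, effort_box M c & forall b, effort_box M b -> f b <= f c.
Proof.
move=> M0 f_cont.
have box0 : effort_box M 0 by apply/effort_boxP => i; rewrite mxE lexx M0.
have box_compact : compact (effort_box M).
  exact: (@rV_compact _ n (fun=> `[0, M]%classic) (fun=> @segment_compact _ 0 M)).
have f_cont_box : {within effort_box M, continuous f}.
  by apply: continuous_subspaceW f_cont => a /effort_box_nonneg.
have [c cM c_max] := compact_EVT_max (ex_intro _ 0 box0) box_compact f_cont_box.
by exists c => [|b bM]; [rewrite -inE | apply: c_max; rewrite inE].
Qed.

Lemma agents_obj_uniform f lam :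
  agents_obj f (const_mx lam^-1) = net_output f lam.
Proof.
apply/funext => a; rewrite /agents_obj /net_output mulr_sumr; congr (_ - _).
by apply: eq_bigr => i _; rewrite mxE invrK mulrC.
Qed.

Lemma simplex_uniform : (0 < n)%N -> simplex (const_mx (n%:R : R)^-1 : 'rV_n).
Proof.
move=> n0; split=> [i|]; first by rewrite mxE invr_ge0 ler0n.
under eq_bigr do rewrite mxE.
by rewrite sumr_const card_ord -[_ *+ n]mulr_natr mulVf // pnatr_eq0 -lt0n.
Qed.

Lemma posv_uniform : (0 < n)%N -> posv (const_mx (n%:R : R)^-1 : 'rV_n).
Proof. by move=> n0 i; rewrite mxE invr_gt0 ltr0n. Qed.

End EffortProfiles.

Section HomogeneousProduction.
Variables (R : realType) (n : nat) (f : 'rV[R]_n -> R) (k : R).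
Hypotheses (k_gt0 : 0 < k) (k_lt1 : k < 1) (f_hom : homogeneous_deg f k).
Implicit Types (lam B : R) (a b c d : 'rV[R]_n).

Let k01 : 0 < k < 1. Proof. by rewrite k_gt0 k_lt1. Qed.
Let k1_gt0 : 0 < 1 - k. Proof. by rewrite subr_gt0. Qed.

Lemma homogeneous_deg_at0 : f 0 = 0.
Proof.
have := f_hom (ltr0Sn R 1) (@nonneg0 R n); rewrite scaler0 => f0.
have k2 : 2 `^ k - 1 != 0 :> R.
  by rewrite subr_eq0 powR_eq1 (gt_eqF k_gt0) /= orbF; apply/norP; split; lra.
by apply/eqP; rewrite -(mulrI_eq0 _ (lregP k2)) mulrBl mul1r -f0 subrr.
Qed.

Lemma net_output_le0_far lam B b : 0 < lam -> 0 <= B ->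
  (forall d, effort_box 1 d -> f d <= B) -> nonneg b ->
  ((1 + B) / lam) `^ (1 - k)^-1 <= total_effort b -> net_output f lam b <= 0.
Proof.
move=> lam0 B0 f_le_B b0.
set M := _ `^ _; set s := total_effort b => far.
have B1 : 0 <= (1 + B) / lam by rewrite divr_ge0 //; lra.
have M0 : 0 < M by rewrite powR_gt0 // divr_gt0 //; lra.
have s0 : 0 < s := lt_le_trans M0 far.
have far' : (1 + B) / lam <= s `^ (1 - k).
  have <- : M `^ (1 - k) = (1 + B) / lam.
    by rewrite -powRrM mulVf ?gt_eqF // powRr1.
  by apply: ge0_ler_powR; rewrite ?nnegrE ?(ltW k1_gt0) ?(ltW M0) ?(ltW s0).
pose d := s^-1 *: b.
have d_box : effort_box 1 d.
  apply/effort_boxP => i; rewrite mxE mulr_ge0 ?invr_ge0 ?b0 ?(ltW s0) //=.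
  by rewrite mulrC ler_pdivrMr // mul1r coord_le_total_effort.
have fb : f b = s `^ k * f d.
  rewrite -f_hom //; last exact: effort_box_nonneg d_box.
  by rewrite /d scalerA divff ?gt_eqF // scale1r.
have sk : s `^ k * s `^ (1 - k) = s.
  by rewrite -powRD subrKC ?oner_eq0 // powRr1 // ltW.
have sk0 : 0 < s `^ k by rewrite powR_gt0.
rewrite /net_output fb -/s subr_le0.
apply: le_trans (ler_wpM2l (ltW sk0) (f_le_B _ d_box)) _.
rewrite -[in leRHS]sk mulrCA ler_wpM2l ?(ltW sk0) //.
by move: far'; rewrite ler_pdivrMr // mulrC; apply: le_trans; rewrite lerDr.
Qed.

Lemma exists_net_output_max lam : 0 < lam ->
  {within [set a | nonneg a], continuous f} ->
  exists2 c, nonneg c &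
    forall b, nonneg b -> net_output f lam b <= net_output f lam c.
Proof.
move=> lam0 f_cont.
have [d _ d_max] := orthant_continuous_box_max ler01 f_cont.
have B0 : 0 <= f d.
  rewrite -homogeneous_deg_at0; apply: d_max.
  by apply/effort_boxP => i; rewrite mxE lexx ler01.
set M := ((1 + f d) / lam) `^ (1 - k)^-1.
have [c cM c_max] := orthant_continuous_box_max (powR_ge0 _ _ : 0 <= M)
  (net_output_continuous (lam := lam) f_cont).
exists c; first exact: effort_box_nonneg cM.
move=> b b0.
have [/forallP bM | /forallPn [i]] := boolP [forall i, b ord0 i <= M].
  by apply: c_max; apply/effort_boxP => i; rewrite b0 bM.
rewrite -ltNge => biM.
have net_c_ge0 : 0 <= net_output f lam c.
  have <- : net_output f lam 0 = 0.
    by rewrite /net_output homogeneous_deg_at0 total_effort0 mulr0 subr0.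
  by apply: c_max; apply/effort_boxP => j; rewrite mxE lexx powR_ge0.
apply: le_trans net_c_ge0; apply: (net_output_le0_far lam0 B0 d_max b0).
exact: le_trans (ltW biM) (coord_le_total_effort i b0).
Qed.

Section NetOutputMaximizer.
Variables (lam : R) (c : 'rV[R]_n).
Hypotheses (lam_gt0 : 0 < lam) (c_ge0 : nonneg c).
Hypothesis c_max : forall b, nonneg b -> net_output f lam b <= net_output f lam c.

Lemma net_output_max_euler : k * f c <= lam * total_effort c.
Proof.
apply: (euler_le_of_ray_max k01).
  exact: mulr_ge0 (ltW lam_gt0) (total_effort_ge0 c_ge0).
move=> l l1.
have l0 : 0 < l by lra.
have := c_max (nonnegZ (ltW l0) c_ge0).
by rewrite /net_output f_hom // total_effortZ mulrCA.
Qed.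

Lemma net_output_max_ge a : nonneg a -> f a = total_effort a ->
  (k / lam) `^ (k / (1 - k)) * f a <= f c.
Proof.
move=> a0 fa.
have k_lam : 0 < k / lam by rewrite divr_gt0.
set t := (k / lam) `^ (1 - k)^-1.
have t0 : 0 < t by rewrite powR_gt0.
have tk : t `^ k = (k / lam) `^ (k / (1 - k)) by rewrite /t -powRrM [_^-1 * k]mulrC.
have t1k : t `^ (1 - k) = k / lam.
  by rewrite /t -powRrM mulVf ?gt_eqF // powRr1 // ltW.
have lam_t : lam * t = k * t `^ k.
  have tE : t `^ k * t `^ (1 - k) = t.
    by rewrite -powRD subrKC ?oner_eq0 // powRr1 // ltW.
  by rewrite -[in LHS]tE t1k mulrCA [lam * _]mulrCA mulfV ?gt_eqF // mulr1 mulrC.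
have := c_max (nonnegZ (ltW t0) a0).
have := net_output_max_euler.
rewrite /net_output f_hom // total_effortZ -fa mulrA lam_t tk.
set C := _ `^ _ => euler opt.
have : (1 - k) * (C * f a) <= (1 - k) * f c by lra.
by rewrite ler_pM2l.
Qed.

End NetOutputMaximizer.

End HomogeneousProduction.

Theorem mainTheorem16 (R : realType) (n : nat) (f : 'rV[R]_n -> R) (k : R) :
  (0 < n)%N ->
  0 < k < 1 ->
  strictly_concave_on_orthant f ->
  {within [set a | nonneg a], continuous f} ->
  (forall a : 'rV[R]_n, posv a -> differentiable f a) ->
  homogeneous_deg f k ->
  (((k / n%:R) `^ (k / (1 - k)))%:E * V_FB f <= V_LIN f)%E.
Proof.
move=> n0 /andP[k0 k1] _ f_cont _ f_hom.
have n_gt0 : 0 < n%:R :> R by rewrite ltr0n.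
have [c c0 c_max] := exists_net_output_max k0 k1 f_hom n_gt0 f_cont.
have c_eq : induced_eq f (const_mx n%:R^-1) c.
  by split=> // b b0; rewrite agents_obj_uniform; exact: c_max.
have lin_ge : ((f c)%:E <= V_LIN f)%E.
  apply: ereal_sup_ubound; exists c => //.
  by exists (const_mx n%:R^-1); split; [exact: simplex_uniform | exact: posv_uniform |].
set C := (k / n%:R) `^ (k / (1 - k)).
have C0 : 0 < C by rewrite powR_gt0 // divr_gt0.
have fb_le : (V_FB f <= (f c / C)%:E)%E.
  apply/ereal_supP => _ [a [a0 fa] <-]; rewrite lee_fin ler_pdivlMr // mulrC.
  exact: (net_output_max_ge k0 k1 f_hom n_gt0 c0 c_max a0 fa).
apply: (le_trans _ lin_ge).
have -> : (f c)%:E = (C%:E * (f c / C)%:E)%E by rewrite -EFinM mulrC divfK ?gt_eqF.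
by apply: lee_wpmul2l; rewrite // lee_fin ltW.
Qed.
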